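(* Let $H_t=\mathbb{E}(Y_tY_t')$ (expectation under the annealed law $\mathbb{P}$) and $H^\xi_t=\mathbb{E}_\xi(Y_tY_t')$ (expectation under the quenched law $\mathbb{P}_\xi$), where $Y_t'$ is the transpose. Then $$\frac1t H_t\to\eta^2,$$ and for $\Pi$-almost every $\xi$, $$\frac1t H^\xi_t\to\eta^2,$$ as $t\to\infty$, where $(\eta^2)_{ij}=\sum_{u\in\mathbb{Z}^n}(u_i-b_i)(u_j-b_j)\bar P(u)$.
   Context: Let $\mathbb{S}$ be a finite set and $\pi$ a probability measure on $\mathbb{S}$. The environment $\xi=\{\xi_t(x): x\in\mathbb{Z}^n, t\in\mathbb{Z}^+\}$ consists of i.i.d. $\mathbb{S}$-valued random variables with law $\pi$; $\Pi$ denotes its law. Let $P_0$ be a probability distribution on $\mathbb{Z}^n$ and $c:\mathbb{Z}^n\times\mathbb{S}\to\mathbb{R}$ such that: $0\le P_0(u)+c(u,s)\le 1$ for all $u,s$; $\sum_{u}c(u,s)=0$ for all $s$; $\sum_{s}c(u,s)\pi(s)=0$ for all $u$; $P_0$ and $c$ have bounded range; and there is $b^c\in\mathbb{R}^n$ with $\sum_u u\,c(u,s)=b^c$ for all $s$. Given $\xi$, $(X_t)$ is the Markov chain on $\mathbb{Z}^n$ (from a fixed starting point) with $\mathbb{P}(X_{t+1}=y\mid X_t=x,\xi)=P_0(y-x)+c(y-x,\xi_t(x))$; $\mathbb{P}_\xi$ denotes this quenched law and $\mathbb{P}=\int\mathbb{P}_\xi\,\Pi(d\xi)$ the annealed law.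 Let $\bar P(u)=P_0(u)+\sum_s\pi(s)c(u,s)$, $b^0=\sum_u uP_0(u)$, $b=b^0+b^c$, $Y_t=X_t-tb$ (a column vector). *)

From HB Require Import structures.
From mathcomp Require Import all_boot all_order all_algebra.
From mathcomp Require Import all_classical all_reals all_analysis.
Set Implicit Arguments. Unset Strict Implicit. Unset Printing Implicit Defensive.
Import Order.TTheory GRing.Theory Num.Theory.
Local Open Scope ring_scope.
Local Open Scope classical_set_scope.

Notation Zvec n := 'cV[int]_n.

Definition toR {R : realType} {n : nat} (u : Zvec n) : 'cV[R]_n :=
  map_mx (fun z : int => z%:~R) u.

(* The environment xi = {xi_t(x)} (a family of S-valued random variables
   on (Omega, P)) consists of i.i.d. random variables with law pi:
   each event {xi_t(x) = s} is measurable, and for any finite family of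
   distinct space-time points (t_k, x_k) and values s_k,
   P(xi_{t_k}(x_k) = s_k for all k) = prod_k pi(s_k). *)
Definition iid_env {d : measure_display} {Omega : measurableType d}
  {R : realType} {n : nat} {S : finType}
  (P : probability Omega R) (xi : nat -> Zvec n -> Omega -> S) (pi : S -> R) : Prop :=
  (forall t x s, measurable [set w | xi t x w = s]) /\
  (forall (I : seq (nat * Zvec n)) (f : nat * Zvec n -> S), uniq I ->
     P [set w | forall k, k \in I -> xi k.1 k.2 w = f k]
       = (\prod_(k <- I) pi (f k))%:E).

(* Quenched expectation of f(X_{t0+k}) for the Markov chain in the
   (deterministic) environment env, started from X_{t0} = x, with
   transition probabilities P(X_{t+1} = y | X_t = x) = P0(y-x) + c(y-x, env t x).
   U is a finite duplicate-free list containing all possible jumps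
   (outside U, P0 and c vanish), so the sum over u in Z^n reduces to
   a sum over U. *)
Fixpoint qexp {R : realType} {n : nat} {S : finType}
  (U : seq (Zvec n)) (P0 : Zvec n -> R) (c : Zvec n -> S -> R)
  (env : nat -> Zvec n -> S) (t0 : nat) (x : Zvec n) (k : nat)
  (f : Zvec n -> R) : R :=
  match k with
  | 0 => f x
  | k'.+1 => \sum_(u <- U) (P0 u + c u (env t0 x)) *
               qexp U P0 c env t0.+1 (x + u) k' f
  end.

Definition drift0 {R : realType} {n : nat} (U : seq (Zvec n)) (P0 : Zvec n -> R)
  : 'cV[R]_n := \sum_(u <- U) P0 u *: toR u.

Definition Pbar {R : realType} {n : nat} {S : finType}
  (P0 : Zvec n -> R) (c : Zvec n -> S -> R) (pi : S -> R) (u : Zvec n) : R :=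
  P0 u + \sum_(s : S) pi s * c u s.

Definition eta2 {R : realType} {n : nat} {S : finType}
  (U : seq (Zvec n)) (P0 : Zvec n -> R) (c : Zvec n -> S -> R) (pi : S -> R)
  (b : 'cV[R]_n) (i j : 'I_n) : R :=
  \sum_(u <- U) ((toR u) i 0 - b i 0) * ((toR u) j 0 - b j 0) * Pbar P0 c pi u.

(* Quenched second moment H^xi_t = E_xi (Y_t Y_t'), entry (i,j),
   with Y_t = X_t - t b and X_0 = x0. *)
Definition Hq {R : realType} {n : nat} {S : finType}
  (U : seq (Zvec n)) (P0 : Zvec n -> R) (c : Zvec n -> S -> R)
  (env : nat -> Zvec n -> S) (x0 : Zvec n) (b : 'cV[R]_n) (t : nat) (i j : 'I_n) : R :=
  qexp U P0 c env 0 x0 t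
    (fun x => ((toR x) i 0 - t%:R * b i 0) * ((toR x) j 0 - t%:R * b j 0)).

From HB Require Import structures.
From mathcomp Require Import all_boot all_order all_algebra.
From mathcomp Require Import all_classical all_reals all_analysis.
From mathcomp Require Import ring lra zify.
From mathcomp Require Import measurable_realfun.
Set Implicit Arguments. Unset Strict Implicit. Unset Printing Implicit Defensive.
Import Order.TTheory GRing.Theory Num.Theory numFieldNormedType.Exports.
Local Open Scope ring_scope.
Local Open Scope classical_set_scope.

(* Every one-step kernel P0 + c(., s) has mean b, so a first-step computation
   gives H^xi_t = Y_0 Y_0' + t eta0 + sum_(k < t) Z_k, where eta0 is the
   P0-part of eta^2 and Z_k is the quenched expectation of g(xi_k(X_k)), with
   g(s) = sum_u c(u,s) (u - b)(u - b)'.  The law of X_k under P_xi only depends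
   on the environment before time k, which is independent of xi_k, and
   E_pi g = 0 (this is also why eta0 = eta^2).  Hence the Z_k are bounded
   orthogonal increments: E (sum_(k < t) Z_k) = 0, which gives the annealed
   limit, and E (sum_(k < N) Z_k)^2 <= N M^2.  Along the squares N = m^2 the
   second moments of the normalised sums are summable, so they tend to 0
   almost surely, and the bounded increments fill the gaps between
   consecutive squares. *)

Section QuenchedExpectation.
Variables (R : realType) (n : nat) (S : finType).
Variables (U : seq (Zvec n)) (P0 : Zvec n -> R) (c : Zvec n -> S -> R).
Local Notation qexp := (qexp U P0 c).

Lemma qexpD env t0 x k f g :
  qexp env t0 x k (fun y => f y + g y) = qexp env t0 x k f + qexp env t0 x k g.
Proof.
elim: k t0 x => [|k IHk] t0 x //=.
by rewrite -big_split; apply: eq_bigr => u _; rewrite IHk mulrDr.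
Qed.

Lemma qexpZ env t0 x k a f :
  qexp env t0 x k (fun y => a * f y) = a * qexp env t0 x k f.
Proof.
elim: k t0 x => [|k IHk] t0 x //=.
by rewrite mulr_sumr; apply: eq_bigr => u _; rewrite IHk mulrCA.
Qed.

Lemma qexpS env t0 x k f : qexp env t0 x k.+1 f =
  \sum_(u <- U) (P0 u + c u (env t0 x)) * qexp env t0.+1 (x + u) k f.
Proof. by []. Qed.

Lemma qexpSr env t0 x k f :
  qexp env t0 x k.+1 f =
  qexp env t0 x k (fun y => \sum_(u <- U) (P0 u + c u (env (t0 + k)%N y)) * f (y + u)).
Proof.
elim: k t0 x => [|k IHk] t0 x; first by rewrite /= addn0.
by rewrite qexpS [RHS]qexpS; apply: eq_bigr => u _; rewrite IHk addSnnS.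
Qed.

Fixpoint reach (x : Zvec n) (k : nat) : seq (Zvec n) :=
  if k is k'.+1 then flatten [seq reach (x + u) k' | u <- U] else [:: x].

Lemma eq_qexp_reach env t0 x k f g : {in reach x k, f =1 g} ->
  qexp env t0 x k f = qexp env t0 x k g.
Proof.
elim: k t0 x => [|k IHk] t0 x fg /=; first by apply: fg; rewrite inE.
apply: eq_big_seq => u uU; congr (_ * _); apply: IHk => y yr; apply: fg.
by apply/flattenP; exists (reach (x + u) k) => //; apply/mapP; exists u.
Qed.

Hypothesis P0_sum1 : \sum_(u <- U) P0 u = 1.
Hypothesis c_sum0 : forall s, \sum_(u <- U) c u s = 0.
Hypothesis kernel_ge0 : forall u s, 0 <= P0 u + c u s.

Lemma kernel_sum1 s : \sum_(u <- U) (P0 u + c u s) = 1.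
Proof. by rewrite big_split /= P0_sum1 c_sum0 addr0. Qed.

Lemma qexp_cst env t0 x k a : qexp env t0 x k (fun=> a) = a.
Proof.
elim: k t0 x => [|k IHk] t0 x //=.
by under eq_bigr do rewrite IHk; rewrite -mulr_suml kernel_sum1 mul1r.
Qed.

Lemma qexp_sum env t0 x k (I : Type) (r : seq I) (F : I -> Zvec n -> R) :
  qexp env t0 x k (fun y => \sum_(i <- r) F i y) =
  \sum_(i <- r) qexp env t0 x k (F i).
Proof.
elim: r => [|a r IHr].
  by under eq_fun do rewrite big_nil; rewrite qexp_cst big_nil.
by under eq_fun do rewrite big_cons; rewrite qexpD IHr big_cons.
Qed.

Lemma qexp_norm_le env t0 x k f M : (forall y, `|f y| <= M) ->
  `|qexp env t0 x k f| <= M.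
Proof.
move=> fM; elim: k t0 x => [|k IHk] t0 x /=; first exact: fM.
apply: (le_trans (ler_norm_sum _ _ _)).
rewrite -[M]mul1r -(kernel_sum1 (env t0 x)) mulr_suml.
apply: ler_sum => u _; rewrite normrM ger0_norm //.
exact: ler_wpM2l.
Qed.

(* [qexp env t0 x k (fun z => (z == y)%:R)] is the quenched probability that
   the walk is at [y] after [k] steps. *)
Lemma qexp_reachE env t0 x k f : qexp env t0 x k f =
  \sum_(y <- undup (reach x k)) f y * qexp env t0 x k (fun z => (z == y)%:R).
Proof.
under [RHS]eq_bigr do rewrite -qexpZ.
rewrite -qexp_sum; apply: eq_qexp_reach => y yr.
rewrite (bigD1_seq y) ?undup_uniq ?mem_undup //= eqxx mulr1 big1 ?addr0 //.
by move=> z /negPf zy; rewrite eq_sym zy mulr0.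
Qed.

Lemma kernel_mean_drift (bc : 'cV[R]_n) :
  (forall s, \sum_(u <- U) c u s *: toR u = bc) ->
  forall s i', \sum_(u <- U) (P0 u + c u s) * (toR u) i' 0 = (drift0 U P0 + bc) i' 0.
Proof.
move=> c_drift s i'; rewrite /drift0 mxE -(c_drift s) !summxE -big_split /=.
by apply: eq_bigr => u _; rewrite !mxE mulrDl.
Qed.

Variables (b : 'cV[R]_n) (i j : 'I_n).
Hypothesis kernel_mean : forall s i', \sum_(u <- U) (P0 u + c u s) * (toR u) i' 0 = b i' 0.

Definition dev i' (u : Zvec n) : R := (toR u) i' 0 - b i' 0.
Definition cov0 : R := \sum_(u <- U) P0 u * (dev i u * dev j u).
Definition cov_fluct (s : S) : R := \sum_(u <- U) c u s * (dev i u * dev j u).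
Definition Yprod (k : nat) (x : Zvec n) : R :=
  ((toR x) i 0 - k%:R * b i 0) * ((toR x) j 0 - k%:R * b j 0).

Lemma toRD i' (x y : Zvec n) : (toR (x + y) : 'cV[R]_n) i' 0 = (toR x) i' 0 + (toR y) i' 0.
Proof. by rewrite !mxE intrD. Qed.

Lemma kernel_dev_sum0 s i' : \sum_(u <- U) (P0 u + c u s) * dev i' u = 0.
Proof.
rewrite /dev; under eq_bigr do rewrite mulrBr.
by rewrite sumrB kernel_mean -mulr_suml kernel_sum1 mul1r subrr.
Qed.

Lemma Yprod_step s k y :
  \sum_(u <- U) (P0 u + c u s) * Yprod k.+1 (y + u) = Yprod k y + cov0 + cov_fluct s.
Proof.
set Ai := (toR y) i 0 - k%:R * b i 0; set Aj := (toR y) j 0 - k%:R * b j 0.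
under eq_bigr => u _.
  have -> : (P0 u + c u s) * Yprod k.+1 (y + u) =
      (P0 u + c u s) * Yprod k y + Ai * ((P0 u + c u s) * dev j u) +
      Aj * ((P0 u + c u s) * dev i u) +
      (P0 u * (dev i u * dev j u) + c u s * (dev i u * dev j u)).
    by rewrite /Yprod /dev !toRD -natr1 /Ai /Aj; ring.
  over.
rewrite !big_split /= -!mulr_sumr -mulr_suml kernel_sum1 !kernel_dev_sum0.
by rewrite /cov0 /cov_fluct; ring.
Qed.

Lemma Hq_decomp env x0 t : Hq U P0 c env x0 b t i j =
  Yprod 0 x0 + t%:R * cov0 + \sum_(k < t) qexp env 0 x0 k (fun y => cov_fluct (env k y)).
Proof.
elim: t => [|t IHt]; first by rewrite big_ord0 mul0r !addr0.
rewrite /Hq in IHt *; rewrite qexpSr add0n.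
under eq_fun do rewrite Yprod_step.
by rewrite !qexpD qexp_cst IHt big_ord_recr /= -natr1; ring.
Qed.

Lemma eta2E (pi : S -> R) : (forall u, \sum_(s : S) c u s * pi s = 0) ->
  eta2 U P0 c pi b i j = cov0.
Proof.
move=> c_pi0; rewrite /eta2 /cov0 /Pbar; apply: eq_bigr => u _.
under eq_bigr do rewrite mulrC.
by rewrite c_pi0 addr0 /dev mulrC.
Qed.

End QuenchedExpectation.

Section SimpleFunctionIntegral.
Context d (Omega : measurableType d) (R : realType).
Variable mu : {finite_measure set Omega -> \bar R}.
Variables (K : finType) (a : K -> R) (A : K -> set Omega).
Hypothesis mA : forall k, measurable (A k).

Lemma integrable_sum_indic :
  mu.-integrable setT (fun w => (\sum_k a k * \1_(A k) w)%:E).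
Proof.
under eq_fun do rewrite -sumEFin.
apply: integrable_sum => // k _; under eq_fun do rewrite EFinM.
exact/integrableZl/integrable_indic.
Qed.

Lemma integral_sum_indic (m : K -> R) : (forall k, mu (A k) = (m k)%:E) ->
  (\int[mu]_w (\sum_k a k * \1_(A k) w)%:E = (\sum_k a k * m k)%:E)%E.
Proof.
move=> muA; under eq_integral do rewrite -sumEFin.
rewrite integral_sum //; last first.
  move=> k; under eq_fun do rewrite EFinM.
  exact/integrableZl/integrable_indic.
rewrite -sumEFin; apply: eq_bigr => k _; under eq_integral do rewrite EFinM.
rewrite integralZl //; last exact: integrable_indic.
by rewrite integral_indic // setIT EFinM -muA.
Qed.

End SimpleFunctionIntegral.

Section IndependentFamily.
Context d (Omega : measurableType d) (R : realType) (P : probability Omega R).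
Variables (T : eqType) (S : finType) (X : T -> Omega -> S) (pi : S -> R) (s0 : S).

Definition cylinder (I : seq T) (F : T -> S) : set Omega :=
  [set w | forall p, p \in I -> X p w = F p].

Definition depends_on (I : seq T) (W : Omega -> R) : Prop :=
  forall w w', {in I, forall p, X p w = X p w'} -> W w = W w'.

Hypothesis X_measurable : forall p s, measurable [set w | X p w = s].
Hypothesis X_iid : forall (I : seq T) (F : T -> S), uniq I ->
  P (cylinder I F) = (\prod_(p <- I) pi (F p))%:E.

Lemma depends_on_sub I J W : {subset I <= J} -> depends_on I W -> depends_on J W.
Proof. by move=> IJ dW w w' XJ; apply: dW => p /IJ; apply: XJ. Qed.

Lemma depends_on_undup I W : depends_on I W -> depends_on (undup I) W.
Proof. by apply: depends_on_sub => p; rewrite mem_undup. Qed.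

Lemma depends_on_cst I a : depends_on I (fun=> a).
Proof. by []. Qed.

Lemma depends_onM I W1 W2 :
  depends_on I W1 -> depends_on I W2 -> depends_on I (fun w => W1 w * W2 w).
Proof. by move=> d1 d2 w w' XI; rewrite (d1 w w' XI) (d2 w w' XI). Qed.

Lemma depends_on_sum I (K : Type) (r : seq K) (F : K -> Omega -> R) :
  (forall k, depends_on I (F k)) -> depends_on I (fun w => \sum_(k <- r) F k w).
Proof. by move=> dF w w' XI; apply: eq_bigr => k _; apply: dF. Qed.

Lemma depends_on_X I p (h : S -> R) : p \in I -> depends_on I (fun w => h (X p w)).
Proof. by move=> pI w w' XI; rewrite XI. Qed.

Lemma measurable_cylinder I F : measurable (cylinder I F).
Proof.
elim: I => [|p I IHI].
  by rewrite (_ : cylinder _ _ = setT) //; apply/seteqP; split => w //= _ q.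
rewrite (_ : cylinder _ _ = [set w | X p w = F p] `&` cylinder I F).
  exact: measurableI.
apply/seteqP; split => w /=.
  by move=> XF; split => [|q qI]; apply: XF; rewrite inE ?eqxx ?qI ?orbT.
by move=> [Xp XI] q; rewrite inE => /orP[/eqP ->|/XI].
Qed.

(* A configuration on [I] is indexed by the positions in [I]; [s0] is an
   arbitrary value outside [I]. *)
Definition cfg_fun I (f : {ffun 'I_(size I) -> S}) (p : T) : S :=
  if insub (index p I) is Some k then f k else s0.

Definition cfg_at I (w : Omega) : {ffun 'I_(size I) -> S} :=
  [ffun k => X (tnth (in_tuple I) k) w].
Arguments cfg_fun : clear implicits.
Arguments cfg_at : clear implicits.

Lemma cfg_fun_at I w : {in I, forall p, cfg_fun I (cfg_at I w) p = X p w}.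
Proof.
move=> p pI; rewrite /cfg_fun; case: insubP => [k _ kE|]; last by rewrite index_mem pI.
by rewrite ffunE (tnth_nth p) /= kE nth_index.
Qed.

Lemma cylinder_cfg_at I w : cylinder I (cfg_fun I (cfg_at I w)) w.
Proof. by move=> p pI; rewrite cfg_fun_at. Qed.

Lemma cylinder_cfgP I f w : uniq I -> cylinder I (cfg_fun I f) w -> f = cfg_at I w.
Proof.
move=> uI Xf; apply/ffunP => k; rewrite ffunE (tnth_nth (tnth (in_tuple I) k)) /=.
have := Xf _ (mem_nth (tnth (in_tuple I) k) (ltn_ord k)).
rewrite /cfg_fun index_uniq //; case: insubP => [k' _ k'E|]; last by rewrite ltn_ord.
by rewrite (val_inj k'E) => ->.
Qed.

Lemma depends_on_simple I W : uniq I -> depends_on I W ->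
  exists v : {ffun 'I_(size I) -> S} -> R,
    forall w, W w = \sum_f v f * \1_(cylinder I (cfg_fun I f)) w.
Proof.
move=> uI dW.
pose v f := if pselect (exists w, cylinder I (cfg_fun I f) w) is left h
  then W (proj1_sig (cid h)) else 0.
exists v => w; rewrite (bigD1 (cfg_at I w)) //= big1 ?addr0; last first.
  move=> f fw; rewrite indicE memNset ?mulr0 //.
  by move=> /(cylinder_cfgP uI) wf; rewrite wf eqxx in fw.
rewrite indicE mem_set; last exact: cylinder_cfg_at.
rewrite mulr1 /v.
case: pselect => [h|[]]; last by exists w; apply: cylinder_cfg_at.
case: (cid h) => w' Xw' /=; apply: dW => p pI.
by rewrite -(cfg_fun_at _ pI) Xw'.
Qed.

Lemma depends_on_integrable I W : depends_on I W -> P.-integrable setT (EFin \o W).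
Proof.
move=> /depends_on_undup /(depends_on_simple (undup_uniq I)) [v Wv].
have -> : EFin \o W =
    fun w => (\sum_f v f * \1_(cylinder (undup I) (cfg_fun (undup I) f)) w)%:E.
  by apply: funext => w /=; rewrite Wv.
by apply: integrable_sum_indic => f; apply: measurable_cylinder.
Qed.

Lemma depends_on_measurable I W : depends_on I W -> measurable_fun setT W.
Proof. by move=> /depends_on_integrable /measurable_int /measurable_EFinP. Qed.

Lemma P_cylinderI_X I F q s : uniq I -> q \notin I ->
  P (cylinder I F `&` [set w | X q w = s]) = (pi s * \prod_(p <- I) pi (F p))%:E.
Proof.
move=> uI qI; pose G p := if p == q then s else F p.
have GF : {in I, G =1 F}.
  by move=> p pI; rewrite /G; case: eqP => // pq; rewrite -pq pI in qI.
have -> : cylinder I F `&` [set w | X q w = s] = cylinder (q :: I) G.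
  apply/seteqP; split => w /=.
    move=> [XF Xq] p; rewrite inE => /orP[/eqP ->|pI]; first by rewrite /G eqxx.
    by rewrite GF // XF.
  move=> XG; split => [p pI|]; first by rewrite -GF // XG // inE pI orbT.
  by rewrite XG ?mem_head // /G eqxx.
rewrite X_iid /= ?qI // big_cons {1}/G eqxx.
by congr (_ * _)%:E; apply: eq_big_seq => p pI; rewrite GF.
Qed.

Lemma integral_mul_indep I W q (h : S -> R) : q \notin I -> depends_on I W ->
  (\int[P]_w (W w * h (X q w))%:E =
   \int[P]_w (W w)%:E * (\sum_s pi s * h s)%:E)%E.
Proof.
rewrite -mem_undup => qI /depends_on_undup /(depends_on_simple (undup_uniq I)) [v Wv].
set J := undup I in qI v Wv *.
have mC f : measurable (cylinder J (cfg_fun J f)) by apply: measurable_cylinder.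
have Xs w : h (X q w) = \sum_s h s * \1_[set w | X q w = s] w.
  rewrite (bigD1 (X q w)) //= indicE mem_set // mulr1 big1 ?addr0 // => s sX.
  by rewrite indicE memNset ?mulr0 //= => Xqs; rewrite Xqs eqxx in sX.
have -> : (\int[P]_w (W w)%:E =
    (\sum_f v f * \prod_(p <- J) pi (cfg_fun J f p))%:E)%E.
  under eq_integral do rewrite Wv.
  by apply: integral_sum_indic => // f; apply: X_iid; apply: undup_uniq.
have WhX w : W w * h (X q w) = \sum_(fs : {ffun 'I_(size J) -> S} * S)
    (v fs.1 * h fs.2) * \1_(cylinder J (cfg_fun J fs.1) `&` [set w | X q w = fs.2]) w.
  rewrite Wv Xs mulr_suml -(pair_bigA _ (fun f s =>
    v f * h s * \1_(cylinder J (cfg_fun J f) `&` [set w | X q w = s]) w)).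
  apply: eq_bigr => f _.
  by rewrite mulr_sumr; apply: eq_bigr => s _; rewrite indicI /=; ring.
under eq_integral do rewrite WhX.
rewrite (@integral_sum_indic _ _ _ _ _ _ _ _
    (fun fs => pi fs.2 * \prod_(p <- J) pi (cfg_fun J fs.1 p))); last 2 first.
- by move=> fs; apply: measurableI.
- by move=> fs; apply: P_cylinderI_X => //; apply: undup_uniq.
rewrite -EFinM -(pair_bigA _ (fun f s =>
  v f * h s * (pi s * \prod_(p <- J) pi (cfg_fun J f p)))) big_distrl /=.
congr (_%:E); apply: eq_bigr => f _.
by rewrite mulr_sumr; apply: eq_bigr => s _; ring.
Qed.

End IndependentFamily.

Lemma sqr_cvg0 (R : realFieldType) (u : nat -> R) :
  (fun m => u m ^+ 2) @ \oo --> 0 -> u @ \oo --> 0.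
Proof.
move=> /cvgr0Pnorm_lt u2; apply/cvgr0Pnorm_lt => e e0.
have := u2 (e ^+ 2) (exprn_gt0 2 e0); apply: filterS => m.
rewrite normrX => u2e; have := normr_ge0 (u m); nra.
Qed.

Lemma cvg_affine_div (R : realType) (a e : R) (s : nat -> R) :
  (fun t => s t / t%:R) @ \oo --> 0 ->
  (fun t => t%:R^-1 * (a + t%:R * e + s t)) @ \oo --> e.
Proof.
move=> s_o; apply: (@cvg_trans _ ((fun t => a * t%:R^-1 + e + s t / t%:R) @ \oo)).
  apply: near_eq_cvg; near=> t.
  have t0 : t%:R != 0 :> R by rewrite pnatr_eq0 -lt0n; near: t; exists 1%N.
  by field.
have inv0 : (fun t : nat => t%:R^-1 : R) @ \oo --> 0.
  apply/gtr0_cvgV0; last exact: cvgr_idn.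
  by near=> t; rewrite ltr0n; near: t; exists 1%N.
have lim : _ @ \oo --> _ := cvgD (cvgD (cvgM (cvg_cst a) inv0) (cvg_cst e)) s_o.
rewrite mulr0 add0r addr0 in lim; exact: lim.
Unshelve. all: end_near.
Qed.

Lemma sqr_bracket t : (0 < t)%N -> exists m, (m.+1 ^ 2 <= t < m.+2 ^ 2)%N.
Proof.
elim: t => [//|t IHt] _.
have [->|t_gt0] := posnP t; first by exists 0%N.
have [m /andP[mt tm]] := IHt t_gt0.
have [tm'|mt'] := ltnP t.+1 (m.+2 ^ 2); first by exists m; rewrite tm' andbT; lia.
by exists m.+1; apply/andP; split; nia.
Qed.

Section BoundedIncrements.
Variables (R : realType) (s : nat -> R) (M : R).
Hypothesis s_incr : forall t, `|s t.+1 - s t| <= M.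

Lemma bounded_increments a k : `|s (a + k)%N - s a| <= k%:R * M.
Proof.
elim: k => [|k IHk]; first by rewrite addn0 subrr normr0 mul0r.
have -> : s (a + k.+1)%N - s a = (s (a + k)%N - s a) + (s (a + k).+1 - s (a + k)%N).
  by rewrite addnS; ring.
rewrite -natr1 mulrDl mul1r (le_trans (ler_normD _ _)) //.
exact: lerD.
Qed.

(* Between (m+1)^2 and (m+2)^2 the sequence moves by O(m) = o((m+1)^2). *)
Lemma cvg_div_sqr_subseq :
  (fun m => s (m.+1 ^ 2) / (m.+1 ^ 2)%:R) @ \oo --> 0 ->
  (fun t => s t / t%:R) @ \oo --> 0.
Proof.
move=> /cvgr0Pnorm_le s_sqr; apply/cvgr0Pnorm_le => e e0.
have M0 : 0 <= M by apply: le_trans (s_incr 0).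
have [m1 _ sK] := s_sqr (e / 2) (divr_gt0 e0 (ltr0Sn _ 1)).
have [m2 _ mM] := nbhs_infty_ger (4 * M / e).
exists ((maxn m1 m2).+1 ^ 2)%N => // t /= tK.
have [m /andP[Kt tK']] : exists m, (m.+1 ^ 2 <= t < m.+2 ^ 2)%N.
  by apply: sqr_bracket; apply: leq_trans tK; rewrite expn_gt0.
have mm1 : (m1 <= m)%N by apply: leq_trans (leq_maxl m1 m2) _; nia.
have mm2 : (m2 <= m)%N by apply: leq_trans (leq_maxr m1 m2) _; nia.
have /= sKm := sK m mm1.
set K := (m.+1 ^ 2)%N in Kt sKm.
have K_gt0 : 0 < K%:R :> R by rewrite ltr0n expn_gt0.
have t_gt0 : 0 < t%:R :> R by apply: lt_le_trans K_gt0 _; rewrite ler_nat.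
have sKe : `|s K| <= e / 2 * K%:R.
  by move: sKm; rewrite normrM normfV (gtr0_norm K_gt0) ler_pdivrMr.
have stK : `|s t - s K| <= (t - K)%:R * M.
  by have := bounded_increments K (t - K); rewrite subnKC.
have tK2 : ((t - K)%:R : R) <= 2 * m.+1%:R by rewrite -natrM ler_nat /K; nia.
have Me : 4 * M <= e * m.+1%:R.
  have /= mMm := mM m mm2.
  by rewrite -ler_pdivrMl // mulrC; apply: le_trans mMm _; rewrite ler_nat.
have KR : (K%:R : R) = m.+1%:R * m.+1%:R by rewrite /K natrX expr2.
have Kt' : (K%:R : R) <= t%:R by rewrite ler_nat.
rewrite normrM normfV (gtr0_norm t_gt0) ler_pdivrMr //.
have := ler_normD (s t - s K) (s K); rewrite subrK.
have : 0 <= m.+1%:R :> R by [].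
nra.
Qed.

End BoundedIncrements.

Lemma ae_cvg0_summable_integral d (T : measurableType d) (R : realType)
    (mu : {measure set T -> \bar R}) (f : nat -> T -> R) :
  (forall m w, 0 <= f m w) -> (forall m, measurable_fun setT (f m)) ->
  (\sum_(m <oo) \int[mu]_w (f m w)%:E < +oo)%E ->
  {ae mu, forall w, f ^~ w @ \oo --> 0}.
Proof.
move=> f0 mf sumf.
have mfE m : measurable_fun setT (EFin \o f m) by apply/measurable_EFinP.
have f0E m w : (0 <= (f m w)%:E)%E by rewrite lee_fin.
pose A w := (\sum_(m <oo) (f m w)%:E)%E.
have A0 w : (0 <= A w)%E by apply: nneseries_ge0.
have intA : mu.-integrable setT A.
  apply/integrableP; split.
    by apply: (ge0_emeasurable_sum (P := xpredT)) => [m w _ _|m _]; [exact: f0E|exact: mfE].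
  under eq_integral do rewrite gee0_abs //.
  by rewrite integral_nneseries.
apply: filterS (integrable_ae measurableT intA) => w /(_ I) /fin_numPlt /andP[_ Aw].
exact/cvg_series_cvg_0/nnseries_is_cvg.
Qed.

Lemma sum_inv_sqr_le (R : realFieldType) N :
  \sum_(0 <= m < N) (m.+1%:R ^+ 2)^-1 <= 2 - 2 / N.+1%:R :> R.
Proof.
elim: N => [|N IHN]; first by rewrite big_geq // divr1 subrr.
rewrite big_nat_recr //=; set x : R := N.+1%:R in IHN *.
have x1 : 1 <= x by rewrite ler1n.
have -> : N.+2%:R = x + 1 :> R by rewrite /x -natr1.
clearbody x.
apply: le_trans (lerD IHN (_ : _ <= 2 / x - 2 / (x + 1))) _; last by rewrite addrA subrK.
have -> : 2 / x - 2 / (x + 1) = 2 / (x * (x + 1)).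
  by field; apply/andP; split; rewrite gt_eqF //; lra.
rewrite -div1r ler_pdivrMr ?exprn_gt0 //; last lra.
by rewrite mulrC mulrA ler_pdivlMr; [nra|apply: mulr_gt0; lra].
Qed.

Section OrthogonalIncrements.
Context d (Omega : measurableType d) (R : realType) (P : probability Omega R).
Variables (Z : nat -> Omega -> R) (M : R).
Hypothesis Z_measurable : forall k, measurable_fun setT (Z k).
Hypothesis Z_bounded : forall k w, `|Z k w| <= M.

Definition psum N w := \sum_(k < N) Z k w.

Hypothesis Z_mean0 : forall N, (\int[P]_w (Z N w)%:E = 0)%E.
Hypothesis Z_orthogonal : forall N, (\int[P]_w (psum N w * Z N w)%:E = 0)%E.

Lemma integrable_bounded {f : Omega -> R} {C} : measurable_fun setT f ->
  (forall w, `|f w| <= C) -> P.-integrable setT (EFin \o f).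
Proof.
move=> mf fC; apply: measurable_bounded_integrable => //.
  exact: fin_num_fun_lty.
rewrite /bounded_near; near=> C' => w _ /=; apply: le_trans (fC w) _.
by near: C'; apply: nbhs_pinfty_ge; rewrite num_real.
Unshelve. all: end_near.
Qed.

Lemma measurable_psum N : measurable_fun setT (psum N).
Proof. exact: measurable_sum. Qed.

Lemma psum_norm_le N w : `|psum N w| <= N%:R * M.
Proof.
have -> : N%:R * M = \sum_(k < N) M by rewrite sumr_const card_ord mulr_natl.
by apply: le_trans (ler_norm_sum _ _ _) _; apply: ler_sum => k _.
Qed.

Lemma psum_mean0 N : (\int[P]_w (psum N w)%:E = 0)%E.
Proof.
under eq_integral do rewrite -sumEFin.
rewrite integral_sum //; first by rewrite big1.
by move=> k; exact: (integrable_bounded (Z_measurable k) (Z_bounded k)).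
Qed.

Lemma integrableM_bounded {f g : Omega -> R} {Cf Cg} :
  measurable_fun setT f -> measurable_fun setT g ->
  (forall w, `|f w| <= Cf) -> (forall w, `|g w| <= Cg) ->
  P.-integrable setT (fun w => (f w * g w)%:E).
Proof.
move=> mf mg fC gC; apply: (integrable_bounded (measurable_funM mf mg)) => w.
by rewrite normrM; apply: ler_pM.
Qed.

Lemma integrable_psum_sqr N : P.-integrable setT (fun w => (psum N w ^+ 2)%:E).
Proof.
have bS := psum_norm_le N.
rewrite (_ : (fun w => _) = fun w => (psum N w * psum N w)%:E); last first.
  by apply/funext => w; rewrite expr2.
exact: (integrableM_bounded (measurable_psum N) (measurable_psum N) bS bS).
Qed.

Lemma psumS N w : psum N.+1 w = psum N w + Z N w.
Proof. by rewrite /psum big_ord_recr. Qed.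

Lemma psum_sqr_integral_le N :
  (\int[P]_w (psum N w ^+ 2)%:E <= (N%:R * M ^+ 2)%:E)%E.
Proof.
elim: N => [|N IHN].
  by under eq_integral do rewrite /psum big_ord0 expr0n /=; rewrite integral0 mul0r.
have mS := measurable_psum N; have bS := psum_norm_le N.
have mZ := Z_measurable N; have bZ := Z_bounded N.
have iSS := integrable_psum_sqr N.
have iSZ := integrableM_bounded mS mZ bS bZ.
have iZZ := integrableM_bounded mZ mZ bZ bZ.
have i2SZ : P.-integrable setT (fun w => 2%:E * (psum N w * Z N w)%:E)%E.
  exact: integrableZl.
have ZZ_le : (\int[P]_w (Z N w * Z N w)%:E <= (M ^+ 2)%:E)%E.
  apply: (@le_trans _ _ (\int[P]_w (M ^+ 2)%:E)%E).
    apply: le_integral => //; first exact: finite_measure_integrable_cst.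
    by move=> w _; rewrite lee_fin expr2; have := bZ w; rewrite ler_norml; nra.
  rewrite integral_cst // [X in (_ * X)%E](_ : _ = 1%E) ?mule1 //.
  exact: probability_setT.
under eq_integral => w _.
  rewrite psumS (_ : _ ^+ 2 = psum N w ^+ 2 + (2 * (psum N w * Z N w) + Z N w * Z N w)).
    by rewrite !EFinD [(2 * _)%:E]EFinM; over.
  by ring.
rewrite integralD //; last exact: integrableD.
rewrite integralD // integralZl // Z_orthogonal mule0 add0e.
by rewrite -natr1 mulrDl mul1r EFinD leeD.
Qed.

Lemma psum_div_sqr_integral_le m :
  (\int[P]_w ((psum (m.+1 ^ 2) w / (m.+1 ^ 2)%:R) ^+ 2)%:E
    <= (M ^+ 2 / m.+1%:R ^+ 2)%:E)%E.
Proof.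
set K := (m.+1 ^ 2)%N.
have K_gt0 : 0 < K%:R :> R by rewrite ltr0n expn_gt0.
under eq_integral do rewrite expr_div_n mulrC EFinM.
rewrite integralZl //; last exact: integrable_psum_sqr.
apply: le_trans (lee_wpmul2l _ (psum_sqr_integral_le K)) _.
  by rewrite lee_fin invr_ge0 exprn_ge0 // ltW.
rewrite -EFinM lee_fin.
rewrite (_ : (K%:R ^+ 2)^-1 * (K%:R * M ^+ 2) = M ^+ 2 / m.+1%:R ^+ 2) // /K natrX.
by field; rewrite addrC natr1 pnatr_eq0.
Qed.

Lemma ae_cvg_psum_div : {ae P, forall w, (fun t => psum t w / t%:R) @ \oo --> 0}.
Proof.
pose f m w := (psum (m.+1 ^ 2) w / (m.+1 ^ 2)%:R) ^+ 2.
have f_ge0 m w : 0 <= f m w by apply: sqr_ge0.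
have f_meas m : measurable_fun setT (f m).
  by apply: measurable_funX; apply: measurable_funM => //; apply: measurable_psum.
have sumf : (\sum_(m <oo) \int[P]_w (f m w)%:E < +oo)%E.
  apply: le_lt_trans (ltry (2 * M ^+ 2)).
  apply: (@le_trans _ _ (\sum_(m <oo) (M ^+ 2 / m.+1%:R ^+ 2)%:E)%E).
    apply: lee_nneseries => [m _ _|m _]; last exact: psum_div_sqr_integral_le.
    by apply: integral_ge0 => w _; rewrite lee_fin.
  apply: lime_le; first by apply: is_cvg_nneseries => m _ _; rewrite lee_fin divr_ge0 ?sqr_ge0.
  near=> N; rewrite sumEFin lee_fin -mulr_sumr [_ * M ^+ 2]mulrC.
  apply: ler_wpM2l; first exact: sqr_ge0.
  by apply: le_trans (sum_inv_sqr_le _ N) _; rewrite gerBl divr_ge0.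
have := @ae_cvg0_summable_integral _ _ _ P f f_ge0 f_meas sumf.
apply: filterS => w /sqr_cvg0 f0.
apply: (@cvg_div_sqr_subseq _ _ M) f0 => t.
by rewrite psumS addrAC subrr add0r.
Unshelve. all: end_near.
Qed.

End OrthogonalIncrements.

Section RandomEnvironment.
Variables (R : realType) (n : nat) (S : finType) (pi : S -> R).
Context d (Omega : measurableType d) (P : probability Omega R).
Variables (xi : nat -> Zvec n -> Omega -> S) (s0 : S).
Variables (U : seq (Zvec n)) (P0 : Zvec n -> R) (c : Zvec n -> S -> R).
Variables (b : 'cV[R]_n) (i j : 'I_n) (x0 : Zvec n).
Hypothesis xi_iid : iid_env P xi pi.
Hypothesis P0_sum1 : \sum_(u <- U) P0 u = 1.
Hypothesis c_sum0 : forall s, \sum_(u <- U) c u s = 0.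
Hypothesis kernel_ge0 : forall u s, 0 <= P0 u + c u s.
Hypothesis kernel_mean : forall s i', \sum_(u <- U) (P0 u + c u s) * (toR u) i' 0 = b i' 0.
Hypothesis c_pi0 : forall u, \sum_(s : S) c u s * pi s = 0.

Definition xi_at (p : nat * Zvec n) (w : Omega) : S := xi p.1 p.2 w.
Definition env_of (w : Omega) : nat -> Zvec n -> S := fun t x => xi t x w.
Local Notation depends_on := (depends_on xi_at).
Local Notation cov_fluct := (cov_fluct U c b i j).

Fixpoint queried (t0 : nat) (x : Zvec n) (k : nat) : seq (nat * Zvec n) :=
  if k is k'.+1 then (t0, x) :: flatten [seq queried t0.+1 (x + u) k' | u <- U]
  else [::].

Lemma queried_time t0 x k p : p \in queried t0 x k -> (t0 <= p.1 < t0 + k)%N.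
Proof.
elim: k t0 x => [|k IHk] t0 x //=; rewrite inE => /orP[/eqP -> /=|]; first lia.
by move=> /flattenP[_ /mapP[u _ ->] /IHk /andP[/ltnW -> /=]]; rewrite addnS.
Qed.

Lemma queried_subS t0 x k : {subset queried t0 x k <= queried t0 x k.+1}.
Proof.
elim: k t0 x => [|k IHk] t0 x p //=; rewrite !inE => /orP[->//|].
move=> /flattenP[_ /mapP[u uU ->] /IHk pq]; apply/orP; right.
by apply/flattenP; exists (queried t0.+1 (x + u) k.+1) => //; apply/mapP; exists u.
Qed.

Lemma queried_sub t0 x k N : (k <= N)%N -> {subset queried t0 x k <= queried t0 x N}.
Proof.
elim: N => [|N IHN]; first by rewrite leqn0 => /eqP ->.
by rewrite leq_eqVlt ltnS => /orP[/eqP -> //|/IHN sub p /sub]; apply: queried_subS.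
Qed.

Lemma queried_reach t0 x k y : y \in reach U x k -> ((t0 + k)%N, y) \in queried t0 x k.+1.
Proof.
elim: k t0 x => [|k IHk] t0 x /=; first by rewrite inE addn0 => /eqP ->; rewrite mem_head.
move=> /flattenP[_ /mapP[u uU ->] yr]; rewrite inE; apply/orP; right.
apply/flattenP; exists (queried t0.+1 (x + u) k.+1); first by apply/mapP; exists u.
by rewrite addnS -addSn; apply: IHk.
Qed.

Lemma depends_on_qexp I t0 x k (F : Omega -> Zvec n -> R) :
  {subset queried t0 x k <= I} ->
  (forall y, y \in reach U x k -> depends_on I (F ^~ y)) ->
  depends_on I (fun w => qexp U P0 c (env_of w) t0 x k (F w)).
Proof.
move=> + + w w' xiI; elim: k t0 x => [|k IHk] t0 x sub dF /=.
  by apply: dF w w' xiI; rewrite inE.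
have -> : env_of w t0 x = env_of w' t0 x.
  by apply: (xiI (t0, x)); apply: sub; apply: mem_head.
apply: eq_big_seq => u uU; congr (_ * _); apply: IHk => [p pq|y yr].
  apply: sub; rewrite inE; apply/orP; right.
  by apply/flattenP; exists (queried t0.+1 (x + u) k) => //; apply/mapP; exists u.
apply: dF; apply/flattenP; exists (reach U (x + u) k) => //.
by apply/mapP; exists u.
Qed.

Lemma xi_at_measurable p s : measurable [set w | xi_at p w = s].
Proof. exact: xi_iid.1. Qed.

Lemma xi_at_iid I F : uniq I -> P (cylinder xi_at I F) = (\prod_(p <- I) pi (F p))%:E.
Proof. exact: xi_iid.2. Qed.

Definition fluct (k : nat) (w : Omega) : R :=
  qexp U P0 c (env_of w) 0 x0 k (fun y => cov_fluct (xi k y w)).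
Local Notation psum := (psum fluct).

Lemma depends_on_fluct k : depends_on (queried 0 x0 k.+1) (fluct k).
Proof.
apply: depends_on_qexp => [|y yr]; first exact: queried_subS.
by apply: (depends_on_X _ (p := (k, y))); have := queried_reach 0 yr; rewrite add0n.
Qed.

Arguments depends_on_fluct : clear implicits.

Lemma depends_on_psum N : depends_on (queried 0 x0 N) (psum N).
Proof.
apply: depends_on_sum => k; apply: (depends_on_sub (I := queried 0 x0 k.+1)).
  exact: queried_sub.
exact: depends_on_fluct.
Qed.

Arguments depends_on_psum : clear implicits.

Lemma measurable_fluct k : measurable_fun setT (fluct k).
Proof. exact: (depends_on_measurable P s0 xi_at_measurable (depends_on_fluct k)). Qed.

Lemma fluct_norm_le k w : `|fluct k w| <= \sum_s `|cov_fluct s|.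
Proof.
apply: qexp_norm_le => // y; rewrite (bigD1 (xi k y w)) //= lerDl.
by apply: sumr_ge0 => s _.
Qed.

Lemma cov_fluct_mean0 : \sum_s pi s * cov_fluct s = 0.
Proof.
under eq_bigr do rewrite mulr_sumr.
rewrite exchange_big /=; apply: big1 => u _.
under eq_bigr do rewrite mulrCA mulrA.
by rewrite -mulr_suml c_pi0 mul0r.
Qed.

(* Given the environment before time [N], [fluct N] is an average of the
   centred variables [cov_fluct (xi N y)], which are independent of the past. *)
Lemma integral_mul_fluct N W : depends_on (queried 0 x0 N) W ->
  (\int[P]_w (W w * fluct N w)%:E = 0)%E.
Proof.
move=> dW; pose pN y w := qexp U P0 c (env_of w) 0 x0 N (fun z => (z == y)%:R).
have dWp y : depends_on (queried 0 x0 N) (fun w => W w * pN y w).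
  by apply: depends_onM => //; apply: depends_on_qexp.
have NyI y : (N, y) \notin queried 0 x0 N.
  by apply/negP => /queried_time /=; rewrite add0n ltnn.
under eq_integral => w _.
  rewrite /fluct (qexp_reachE P0_sum1 c_sum0) mulr_sumr -sumEFin.
  under eq_bigr do rewrite mulrCA mulrC.
  over.
rewrite integral_sum //; last first.
  move=> y; apply: (depends_on_integrable P s0 xi_at_measurable
    (I := (N, y) :: queried 0 x0 N) (W := fun w => W w * pN y w * cov_fluct (xi N y w))).
  apply: depends_onM; last by apply: (depends_on_X _ (p := (N, y))); rewrite mem_head.
  apply: (depends_on_sub (I := queried 0 x0 N)) (dWp y) => p pI.
  by rewrite inE pI orbT.
apply: big1 => y _.
rewrite (integral_mul_indep s0 xi_at_measurable xi_at_iid _ (NyI y) (dWp y)).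
by rewrite cov_fluct_mean0 mule0.
Qed.

Lemma integral_fluct N : (\int[P]_w (fluct N w)%:E = 0)%E.
Proof.
under eq_integral do rewrite -[fluct N _]mul1r.
by apply: integral_mul_fluct; apply: depends_on_cst.
Qed.

Lemma integral_psum_mul_fluct N : (\int[P]_w (psum N w * fluct N w)%:E = 0)%E.
Proof. exact: integral_mul_fluct (depends_on_psum N). Qed.

Lemma Hq_env t w : Hq U P0 c (env_of w) x0 b t i j =
  Yprod b i j 0 x0 + t%:R * cov0 U P0 b i j + psum t w.
Proof. exact: Hq_decomp. Qed.

Lemma Hq_annealed_cvg :
  (fun t => ((t%:R)^-1)%:E * \int[P]_w (Hq U P0 c (env_of w) x0 b t i j)%:E)%E @ \oo
    --> (cov0 U P0 b i j)%:E.
Proof.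
set a := Yprod b i j 0 x0; set e := cov0 U P0 b i j.
have int_Hq t : (\int[P]_w (Hq U P0 c (env_of w) x0 b t i j)%:E = (a + t%:R * e)%:E)%E.
  under eq_integral do rewrite Hq_env EFinD.
  rewrite integralD //; last 2 first.
  - exact: finite_measure_integrable_cst.
  - exact: (integrable_bounded P (measurable_psum measurable_fluct t)
      (psum_norm_le fluct_norm_le t)).
  rewrite (psum_mean0 measurable_fluct fluct_norm_le integral_fluct) adde0 integral_cst //.
  by rewrite [X in (_ * X)%E](_ : _ = 1%E) ?mule1 //; exact: probability_setT.
under eq_fun do rewrite int_Hq -EFinM.
apply: cvg_EFin; first by near=> t.
have lim0 : (fun t : nat => 0 / t%:R : R) @ \oo --> 0.
  by under eq_fun do rewrite mul0r; exact: cvg_cst.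
apply: cvg_trans (cvg_affine_div a (e := e) lim0).
by apply: near_eq_cvg; near=> t; rewrite /= addr0.
Unshelve. all: end_near.
Qed.

Lemma Hq_quenched_cvg : {ae P, forall w,
  (fun t => (t%:R)^-1 * Hq U P0 c (env_of w) x0 b t i j) @ \oo --> cov0 U P0 b i j}.
Proof.
have := ae_cvg_psum_div measurable_fluct fluct_norm_le integral_psum_mul_fluct.
apply: filterS => w /(cvg_affine_div (Yprod b i j 0 x0) (e := cov0 U P0 b i j)).
by under eq_fun do rewrite -Hq_env.
Qed.

End RandomEnvironment.

Theorem lemma3p6 (R : realType) (n : nat) (S : finType) (pi : S -> R)
  (d : measure_display) (Omega : measurableType d) (P : probability Omega R)
  (xi : nat -> Zvec n -> Omega -> S)
  (P0 : Zvec n -> R) (c : Zvec n -> S -> R) (U : seq (Zvec n))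
  (bc : 'cV[R]_n) (x0 : Zvec n) :
  (forall s, 0 <= pi s) -> \sum_(s : S) pi s = 1 ->
  iid_env P xi pi ->
  uniq U ->
  (forall u, u \notin U -> P0 u = 0 /\ forall s, c u s = 0) ->
  (forall u, 0 <= P0 u) -> \sum_(u <- U) P0 u = 1 ->
  (forall u s, 0 <= P0 u + c u s <= 1) ->
  (forall s, \sum_(u <- U) c u s = 0) ->
  (forall u, \sum_(s : S) c u s * pi s = 0) ->
  (forall s, \sum_(u <- U) c u s *: toR u = bc) ->
  let b := drift0 U P0 + bc in
  let H := fun w t i j => Hq U P0 c (fun t x => xi t x w) x0 b t i j in
  (forall i j : 'I_n,
     (fun t : nat => ((t%:R)^-1)%:E * \int[P]_w (H w t i j)%:E)%E @ \oo
       --> (eta2 U P0 c pi b i j)%:E) /\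
  {ae P, forall w, forall i j : 'I_n,
     (fun t : nat => (t%:R)^-1 * H w t i j : R) @ \oo --> (eta2 U P0 c pi b i j : R)}.
Proof.
move=> _ pi_sum1 xi_iid _ _ _ P0_sum1 kernel01 c_sum0 c_pi0 c_drift b H.
have [s0 _] : exists s : S, True.
  case: (pickP (@predT S)) => [s _|S0]; first by exists s.
  by move: pi_sum1; rewrite big_pred0 // => /esym/eqP; rewrite oner_eq0.
have kernel_ge0 u s : 0 <= P0 u + c u s by case/andP: (kernel01 u s).
have kernel_mean := kernel_mean_drift P0 c_drift.
split => [i j|].
  rewrite (eta2E U P0 b i j c_pi0).
  exact: (Hq_annealed_cvg s0 x0 xi_iid P0_sum1 c_sum0 kernel_ge0 kernel_mean c_pi0).
apply: filter_forall => i; apply: filter_forall => j; rewrite (eta2E U P0 b i j c_pi0).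
exact: (Hq_quenched_cvg s0 i j x0 xi_iid P0_sum1 c_sum0 kernel_ge0 kernel_mean c_pi0).
Qed.
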